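(* Let $\Phi:\{0,1\}^n\to\{0,1\}^n$ and let $\mu\in\{0,1\}^n$ be a fixed point of $\Phi$. Then: a) $\overline{W}(\mu)=\{\mu'\in\mathbf{B}^n:\exists\rho'\in P_n,\ \lim_{t\to\infty}\Phi^{\rho'}(\mu',t)=\mu\}$ and $\underline{W}(\mu)=\{\mu'\in\mathbf{B}^n:\forall\rho'\in P_n,\ \lim_{t\to\infty}\Phi^{\rho'}(\mu',t)=\mu\}$; b) $\{\mu\}\subset\underline{W}(\mu)\subset\overline{W}(\mu)$; in particular $\mu$ is p-attractive and n-attractive (i.e. $\overline{W}(\mu)\ne\emptyset$ and $\underline{W}(\mu)\neq\emptyset$); c) $\overline{W}(\mu)$ is p-invariant and $\underline{W}(\mu)$ is n-invariant.
   Context: Let $\mathbf{B}=\{0,1\}$ (discrete topology), $n\ge 1$, and $\Phi:\mathbf{B}^n\to\mathbf{B}^n$. For $\nu\in\mathbf{B}^n$ define $\Phi^\nu_i(\mu)=\mu_i$ if $\nu_i=0$ and $\Phi^\nu_i(\mu)=\Phi_i(\mu)$ if $\nu_i=1$. Put $\Phi^{\alpha^0\dots\alpha^k}=\Phi^{\alpha^k}\circ\cdots\circ\Phi^{\alpha^0}$. A sequence $(\alpha^k)_{k\in\mathbf{N}}$ in $\mathbf{B}^n$ is progressive if each set $\{k:\alpha^k_i=1\}$, $i=1,\dots,n$, is infinite. $Seq$ is the set of strictly increasing real sequences unbounded above. $P_n$ is the set of $\rho:\mathbf{R}\to\mathbf{B}^n$ with $\rho(t_k)=\alpha^k$ and $\rho(t)=0$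 for $t\notin\{t_k\}$, $\alpha$ progressive, $(t_k)\in Seq$. Orbit: $\Phi^\rho(\mu,t)=\mu$ for $t<t_0$, $=\Phi^{\alpha^0\dots\alpha^k}(\mu)$ for $t\in[t_k,t_{k+1})$; $Or_\rho(\mu)=\{\Phi^\rho(\mu,t):t\in\mathbf{R}\}$. For $x:\mathbf{R}\to\mathbf{B}^n$, $\lim_{t\to\infty}x(t)=x(t')$ means there is $t'$ with $x(t)=x(t')$ for all $t\ge t'$. $\omega_\rho(\mu)=\{\mu':\exists(s_k)\in Seq,\ \Phi^\rho(\mu,s_k)=\mu'$ for all large $k\}$. $\overline{W}(\mu)=\{\mu':\exists\rho'\in P_n,\ \omega_{\rho'}(\mu')\subset\{\mu\}\}$, $\underline{W}(\mu)=\{\mu':\forall\rho'\in P_n,\ \omega_{\rho'}(\mu')\subset\{\mu\}\}$. A nonempty set $A\subset\mathbf{B}^n$ is p-invariant if for every $\mu\in A$ there is $\rho\in P_n$ with $Or_\rho(\mu)\subset A$, and n-invariant if for every $\mu\in A$ and every $\rho\in P_n$, $Or_\rho(\mu)\subset A$. *)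

From mathcomp Require Import all_boot.
From Stdlib Require Import Reals ClassicalEpsilon.
Unset Printing Implicit Defensive.

Definition Bn (n : nat) := {ffun 'I_n -> bool}.
Definition zeroB (n : nat) : Bn n := [ffun => false].

Definition Phi_nu {n : nat} (Phi : Bn n -> Bn n) (nu : Bn n) (mu : Bn n) : Bn n :=
  [ffun i => if nu i then Phi mu i else mu i].

Fixpoint Phi_seq {n : nat} (Phi : Bn n -> Bn n) (alpha : nat -> Bn n) (k : nat) (mu : Bn n)
  : Bn n :=
  match k with
  | O => Phi_nu Phi (alpha O) mu
  | S k' => Phi_nu Phi (alpha k) (Phi_seq Phi alpha k' mu)
  end.

Definition progressive {n : nat} (alpha : nat -> Bn n) : Prop :=
  forall (i : 'I_n) (N : nat), exists k, (N <= k)%nat /\ alpha k i = true.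

Definition InSeq (t : nat -> R) : Prop :=
  (forall k, Rlt (t k) (t (S k))) /\ (forall M : R, exists k, Rlt M (t k)).

Definition Pn_rep {n : nat} (rho : R -> Bn n) (alpha : nat -> Bn n) (t : nat -> R) : Prop :=
  progressive alpha /\ InSeq t /\
  (forall k, rho (t k) = alpha k) /\
  (forall s : R, (forall k, s <> t k) -> rho s = zeroB n).

Definition in_Pn {n : nat} (rho : R -> Bn n) : Prop := exists alpha t, Pn_rep rho alpha t.

Definition orbit_rel {n : nat} (Phi : Bn n -> Bn n) (alpha : nat -> Bn n) (t : nat -> R)
  (mu : Bn n) (s : R) (x : Bn n) : Prop :=
  (Rlt s (t O) /\ x = mu) \/
  (exists k, Rle (t k) s /\ Rlt s (t (S k)) /\ x = Phi_seq Phi alpha k mu).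

(* For (alpha,t) with t in Seq, orbit_rel is functional and total, so this picks
   the unique value. *)
Definition phi_orbit {n : nat} (Phi : Bn n -> Bn n) (alpha : nat -> Bn n) (t : nat -> R)
  (mu : Bn n) (s : R) : Bn n :=
  epsilon (inhabits mu) (orbit_rel Phi alpha t mu s).

Definition Orb {n : nat} (Phi : Bn n -> Bn n) alpha t (mu : Bn n) : Bn n -> Prop :=
  fun x => exists s : R, phi_orbit Phi alpha t mu s = x.

Definition lim_is {n : nat} (x : R -> Bn n) (m : Bn n) : Prop :=
  exists t' : R, (forall s, Rle t' s -> x s = x t') /\ x t' = m.

Definition omega {n : nat} (Phi : Bn n -> Bn n) alpha t (mu : Bn n) : Bn n -> Prop :=
  fun mu' => exists sk : nat -> R, InSeq sk /\
    exists K, forall k, (K <= k)%nat -> phi_orbit Phi alpha t mu (sk k) = mu'.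

Definition W_over {n : nat} (Phi : Bn n -> Bn n) (mu : Bn n) : Bn n -> Prop :=
  fun mu' => exists rho alpha t, Pn_rep rho alpha t /\
    (forall x, omega Phi alpha t mu' x -> x = mu).

Definition W_under {n : nat} (Phi : Bn n -> Bn n) (mu : Bn n) : Bn n -> Prop :=
  fun mu' => forall rho alpha t, Pn_rep rho alpha t ->
    (forall x, omega Phi alpha t mu' x -> x = mu).

Definition p_invariant {n : nat} (Phi : Bn n -> Bn n) (A : Bn n -> Prop) : Prop :=
  (exists mu, A mu) /\
  forall mu, A mu -> exists rho alpha t, Pn_rep rho alpha t /\
    (forall x, Orb Phi alpha t mu x -> A x).

Definition n_invariant {n : nat} (Phi : Bn n -> Bn n) (A : Bn n -> Prop) : Prop :=
  (exists mu, A mu) /\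
  forall mu, A mu -> forall rho alpha t, Pn_rep rho alpha t ->
    (forall x, Orb Phi alpha t mu x -> A x).

From mathcomp Require Import all_boot.
From Stdlib Require Import Reals Lra ClassicalEpsilon Classical.

(** Since [B^n] is finite, some state recurs along every discrete trajectory
    [k |-> Phi^{alpha^0 ... alpha^k} mu'].  Hence the omega-limit set of an orbit
    is contained in [{mu}] iff the trajectory recurrently, hence (as [mu] is fixed
    by every [Phi^nu]) eventually, equals [mu]; so [W] can be described purely in
    terms of progressive sequences [alpha], and the time sequence [t] is
    irrelevant.  Invariance follows because a tail of a progressive sequence is
    progressive, and a progressive sequence may be prefixed by any finite word. *)

Lemma InSeq_lt {t : nat -> R} : InSeq t -> forall {i j}, (i < j)%nat -> Rlt (t i) (t j).
Proof.
move=> [Ht _] i; elim=> [|j IH] //.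
rewrite ltnS leq_eqVlt => /orP [/eqP ->|Hij]; first exact: Ht.
have := IH Hij; have := Ht j; lra.
Qed.

Lemma InSeq_le {t : nat -> R} : InSeq t -> forall {i j}, (i <= j)%nat -> Rle (t i) (t j).
Proof.
move=> Ht i j; rewrite leq_eqVlt => /orP [/eqP ->|Hij]; first lra.
have := InSeq_lt Ht Hij; lra.
Qed.

Lemma InSeq_INR : InSeq INR.
Proof.
split; first by move=> k; rewrite S_INR; lra.
by move=> M; case: (INR_unbounded M) => k Hk; exists k.
Qed.

Lemma InSeq_subseq (t : nat -> R) (g : nat -> nat) :
  InSeq t -> (forall m, (g m < g m.+1)%nat) -> InSeq (fun m => t (g m)).
Proof.
move=> Ht Hg; have Hge : forall m, (m <= g m)%nat.
  by elim=> [|m IH] //; exact: leq_ltn_trans IH (Hg m).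
split; first by move=> m; apply: InSeq_lt.
move=> M; case: (Ht) => _ /(_ M) [k Hk]; exists k.
have := InSeq_le Ht (Hge k); lra.
Qed.

Lemma finType_recurrent {T : finType} (y : nat -> T) :
  exists x, forall N, exists2 k, (N <= k)%nat & y k = x.
Proof.
apply: NNPP => Hnone.
have Hlast x : exists N, forall k, (N <= k)%nat -> y k <> x.
  apply: NNPP => Hx; apply: Hnone; exists x => N; apply: NNPP => HN; apply: Hx.
  by exists N => k Hk Hyk; apply: HN; exists k.
pose N x := proj1_sig (constructive_indefinite_description _ (Hlast x)).
pose M := (\max_x N x)%N.
have HN x : forall k, (N x <= k)%nat -> y k <> x.
  by rewrite /N; case: constructive_indefinite_description.
exact: (HN (y M) M (leq_bigmax_cond _ isT)).
Qed.

Section Orbits.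
Context {n : nat} {Phi : Bn n -> Bn n}.

Lemma Phi_seq_ext (a b : nat -> Bn n) m x :
  (forall j, (j <= m)%nat -> a j = b j) -> Phi_seq Phi a m x = Phi_seq Phi b m x.
Proof.
elim: m => [|m IH] Hab /=; first by rewrite Hab.
by rewrite IH => [|j Hj]; rewrite Hab // leqW.
Qed.

Lemma Phi_seq_shift (a : nat -> Bn n) k j x :
  Phi_seq Phi a (j + k.+1) x = Phi_seq Phi (fun i => a (i + k.+1)) j (Phi_seq Phi a k x).
Proof. by elim: j => [|j IH] //=; rewrite addSn /= IH. Qed.

Lemma orbit_rel_total alpha t mu s : InSeq t -> exists x, orbit_rel Phi alpha t mu s x.
Proof.
move=> Ht.
case: (Rlt_le_dec s (t O)) => Hs; first by exists mu; left.
have Hex : exists m, (Rlt_dec s (t m) : bool).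
  by case: Ht => _ /(_ s) [m Hm]; exists m; case: Rlt_dec.
case: (ex_minnP Hex) => m; case: Rlt_dec => // Hm _ Hmin.
case: m Hm Hmin => [|k] Hk Hmin; first lra.
exists (Phi_seq Phi alpha k mu); right; exists k; split => //.
case: (Rlt_le_dec s (t k)) => // Hsk.
by have := Hmin k; case: Rlt_dec => // _ /(_ isT); rewrite ltnn.
Qed.

Lemma phi_orbitP alpha t mu s : InSeq t ->
  orbit_rel Phi alpha t mu s (phi_orbit Phi alpha t mu s).
Proof. by move=> Ht; apply: epsilon_spec; exact: orbit_rel_total. Qed.

Lemma phi_orbit_at alpha t mu k : InSeq t ->
  phi_orbit Phi alpha t mu (t k) = Phi_seq Phi alpha k mu.
Proof.
move=> Ht; case: (phi_orbitP alpha t mu (t k) Ht) => [[Hs _]|[j [H1 [H2 ->]]]].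
  by have := InSeq_le Ht (leq0n k); lra.
case: (ltngtP j k) => [Hjk|Hjk|-> //].
- by have := InSeq_le Ht Hjk; lra.
- by have := InSeq_lt Ht Hjk; lra.
Qed.

Lemma phi_orbit_after alpha mu {t K s} : InSeq t -> Rle (t K) s ->
  exists2 k, (K <= k)%nat & phi_orbit Phi alpha t mu s = Phi_seq Phi alpha k mu.
Proof.
move=> Ht HK; case: (phi_orbitP alpha t mu s Ht) => [[Hs _]|[k [H1 [H2 ->]]]].
  by have := InSeq_le Ht (leq0n K); lra.
exists k => //; case: (leqP K k) => // Hk.
by have := InSeq_le Ht Hk; lra.
Qed.

Lemma Orb_cases {alpha t mu x} : InSeq t -> Orb Phi alpha t mu x ->
  x = mu \/ exists k, x = Phi_seq Phi alpha k mu.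
Proof.
move=> Ht [s <-]; case: (phi_orbitP alpha t mu s Ht) => [[_ ->]|[k [_ [_ ->]]]].
  by left.
by right; exists k.
Qed.

Lemma Pn_rep_InSeq {rho : R -> Bn n} {alpha t} : Pn_rep rho alpha t -> InSeq t.
Proof. by case=> _ []. Qed.

Lemma Pn_rep_INR {alpha : nat -> Bn n} : progressive alpha -> exists rho, Pn_rep rho alpha INR.
Proof.
move=> Hp.
pose rho (s : R) := match excluded_middle_informative (exists k, s = INR k) with
  | left H => alpha (proj1_sig (constructive_indefinite_description _ H))
  | right _ => zeroB n end.
exists rho; split=> //; split; first exact: InSeq_INR.
split=> [k|s Hs]; rewrite /rho; case: excluded_middle_informative => [H|H].
- by case: constructive_indefinite_description => j /= /INR_eq ->.
- by exfalso; apply: H; exists k.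
- by case: H => k Hk; case: (Hs k).
- by [].
Qed.

Lemma progressive_shift (alpha : nat -> Bn n) k :
  progressive alpha -> progressive (fun i => alpha (i + k)).
Proof.
move=> Hp i N; case: (Hp i (N + k)) => j [Hj Ej].
exists (j - k); rewrite subnK ?leq_subRL ?(leq_trans _ Hj) ?leq_addl //.
by rewrite addnC.
Qed.

Definition splice (alpha beta : nat -> Bn n) k j :=
  if (j <= k)%nat then alpha j else beta (j - k.+1).

Lemma splice_shift alpha beta k j : splice alpha beta k (j + k.+1) = beta j.
Proof. by rewrite /splice ifN ?addnK // -ltnNge addnS ltnS leq_addl. Qed.

Lemma progressive_splice alpha {beta} k :
  progressive beta -> progressive (splice alpha beta k).
Proof.
move=> Hb i N; case: (Hb i N) => j [Hj Ej]; exists (j + k.+1).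
by rewrite splice_shift (leq_trans Hj (leq_addr _ _)).
Qed.

Section FixedPoint.
Context {mu : Bn n}.
Hypothesis Hfix : Phi mu = mu.

Definition reaches (alpha : nat -> Bn n) (mu' : Bn n) :=
  exists K, Phi_seq Phi alpha K mu' = mu.

Lemma Phi_nu_fixed nu : Phi_nu Phi nu mu = mu.
Proof. by apply/ffunP => i; rewrite ffunE Hfix; case: (nu i). Qed.

Lemma Phi_seq_fixed alpha mu' K m : Phi_seq Phi alpha K mu' = mu -> (K <= m)%nat ->
  Phi_seq Phi alpha m mu' = mu.
Proof.
move=> HK; elim: m => [|m IH]; first by rewrite leqn0 => /eqP <-.
by rewrite leq_eqVlt => /orP [/eqP <- //|Hm] /=; rewrite IH // Phi_nu_fixed.
Qed.

Lemma reaches_mu alpha : reaches alpha mu.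
Proof. by exists 0%N; rewrite /= Phi_nu_fixed. Qed.

Lemma reaches_lim_is {alpha t mu'} : InSeq t -> reaches alpha mu' ->
  lim_is (phi_orbit Phi alpha t mu') mu.
Proof.
move=> Ht [K HK].
have Hlate s : Rle (t K) s -> phi_orbit Phi alpha t mu' s = mu.
  move=> Hs; case: (phi_orbit_after alpha mu' Ht Hs) => k Hk ->; exact: Phi_seq_fixed HK Hk.
exists (t K); split=> [s Hs|]; last by apply: Hlate; lra.
by rewrite !Hlate //; lra.
Qed.

Lemma lim_is_omega {alpha t mu'} : lim_is (phi_orbit Phi alpha t mu') mu ->
  forall x, omega Phi alpha t mu' x -> x = mu.
Proof.
move=> [t' [Hstay Ht']] x [sk [[Hs Hu] [K HK]]].
have Hsk : InSeq sk by split.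
case: (Hu t') => k0 Hk0.
rewrite -(HK (maxn K k0)) ?leq_maxl // Hstay //.
by have := InSeq_le Hsk (leq_maxr K k0); lra.
Qed.

(* Sampling the orbit at the times [t k] where the recurrent state occurs
   exhibits that state in the omega-limit set. *)
Lemma omega_reaches {alpha t mu'} : InSeq t ->
  (forall x, omega Phi alpha t mu' x -> x = mu) -> reaches alpha mu'.
Proof.
move=> Ht Homega.
case: (finType_recurrent (fun k => Phi_seq Phi alpha k mu')) => x Hx.
have Hb N : exists k, (N <= k) && (Phi_seq Phi alpha k mu' == x).
  by case: (Hx N) => k Hk Ek; exists k; rewrite Hk Ek eqxx.
pose next N := ex_minn (Hb N).
have Hnext N : (N <= next N)%nat /\ Phi_seq Phi alpha (next N) mu' = x.
  by rewrite /next; case: ex_minnP => k /andP [-> /eqP ->].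
pose fix g m := if m is m'.+1 then next (g m').+1 else next 0%N.
have Hgx m : Phi_seq Phi alpha (g m) mu' = x by case: m => [|m]; apply: (Hnext _).2.
suff Hxmu : x = mu by exists (g 0%N); rewrite Hgx.
apply: Homega; exists (fun m => t (g m)); split.
  by apply: InSeq_subseq => // m; exact: (Hnext _).1.
by exists 0%N => k _; rewrite phi_orbit_at.
Qed.

Lemma omega_lim_is {alpha t mu'} : InSeq t ->
  (forall x, omega Phi alpha t mu' x -> x = mu) <-> lim_is (phi_orbit Phi alpha t mu') mu.
Proof.
move=> Ht; split; last exact: lim_is_omega.
by move=> /(omega_reaches Ht); exact: reaches_lim_is Ht.
Qed.

Lemma W_overE mu' :
  W_over Phi mu mu' <-> exists2 alpha, progressive alpha & reaches alpha mu'.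
Proof.
split=> [[rho [alpha [t [[Hp [Ht _]] Homega]]]]|[alpha Hp Hr]].
  by exists alpha => //; exact: omega_reaches Ht Homega.
case: (Pn_rep_INR Hp) => rho Hrho; exists rho, alpha, INR; split=> //.
by apply: lim_is_omega; apply: reaches_lim_is InSeq_INR Hr.
Qed.

Lemma W_underE mu' :
  W_under Phi mu mu' <-> forall alpha, progressive alpha -> reaches alpha mu'.
Proof.
split=> [HW alpha Hp|Hr rho alpha t [Hp [Ht _]]].
  case: (Pn_rep_INR Hp) => rho Hrho.
  exact: (omega_reaches InSeq_INR (HW _ _ _ Hrho)).
by apply: lim_is_omega; apply: reaches_lim_is Ht (Hr _ Hp).
Qed.

Lemma W_over_lim_is mu' : W_over Phi mu mu' <->
  exists rho alpha t, Pn_rep rho alpha t /\ lim_is (phi_orbit Phi alpha t mu') mu.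
Proof.
by split=> -[rho [alpha [t [Hrep H]]]]; exists rho, alpha, t;
  split=> //; apply/(omega_lim_is (Pn_rep_InSeq Hrep)).
Qed.

Lemma W_under_lim_is mu' : W_under Phi mu mu' <->
  forall rho alpha t, Pn_rep rho alpha t -> lim_is (phi_orbit Phi alpha t mu') mu.
Proof.
by split=> H rho alpha t Hrep; apply/(omega_lim_is (Pn_rep_InSeq Hrep)); exact: H Hrep.
Qed.

Lemma W_under_mu : W_under Phi mu mu.
Proof. by apply/W_underE => alpha _; exact: reaches_mu. Qed.

Lemma W_under_sub_W_over mu' : W_under Phi mu mu' -> W_over Phi mu mu'.
Proof.
have Hall : progressive (fun _ => [ffun => true] : Bn n).
  by move=> i N; exists N; rewrite ffunE.
by move=> /W_underE HW; apply/W_overE; exists (fun _ => [ffun => true]) => //; apply: HW.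
Qed.

Lemma reaches_shift {alpha mu'} : reaches alpha mu' -> forall k,
  reaches (fun i => alpha (i + k.+1)) (Phi_seq Phi alpha k mu').
Proof.
case=> K HK k; exists K; rewrite -Phi_seq_shift.
by apply: Phi_seq_fixed HK _; rewrite leq_addr.
Qed.

Lemma W_over_p_invariant : p_invariant Phi (W_over Phi mu).
Proof.
split; first by exists mu; apply: W_under_sub_W_over W_under_mu.
move=> mu' HW; case: (HW) => rho [alpha [t [Hrep Homega]]].
exists rho, alpha, t; split=> //; case: Hrep => Hp [Ht _].
move=> x /(Orb_cases Ht) [->|[k ->]] //.
apply/W_overE; exists (fun i => alpha (i + k.+1)); first exact: progressive_shift.
exact/reaches_shift/(omega_reaches Ht).
Qed.

(* To follow [beta] after the first [k+1] steps of [alpha], run the progressive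
   sequence [splice alpha beta k] from [mu']. *)
Lemma W_under_n_invariant : n_invariant Phi (W_under Phi mu).
Proof.
split; first by exists mu; exact: W_under_mu.
move=> mu' HW rho alpha t [_ [Ht _]] x /(Orb_cases Ht) [->|[k ->]] //.
apply/W_underE => beta Hb.
have Hspl := progressive_splice alpha k Hb.
have /reaches_shift/(_ k) [K HK] := proj1 (W_underE mu') HW _ Hspl.
exists K; rewrite (Phi_seq_ext alpha (splice alpha beta k)) => [|j Hj]; last first.
  by rewrite /splice Hj.
by rewrite -HK; apply: Phi_seq_ext => j _; rewrite splice_shift.
Qed.

End FixedPoint.
End Orbits.

Theorem theorem45 (n : nat) (Hn : (1 <= n)%nat) (Phi : Bn n -> Bn n) (mu : Bn n)
  (Hfix : Phi mu = mu) :
  (* a) *)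
  ((forall mu', W_over Phi mu mu' <->
      exists rho alpha t, Pn_rep rho alpha t /\ lim_is (phi_orbit Phi alpha t mu') mu) /\
   (forall mu', W_under Phi mu mu' <->
      forall rho alpha t, Pn_rep rho alpha t -> lim_is (phi_orbit Phi alpha t mu') mu)) /\
  (* b) *)
  (W_under Phi mu mu /\ (forall mu', W_under Phi mu mu' -> W_over Phi mu mu') /\
   (exists mu', W_over Phi mu mu') /\ (exists mu', W_under Phi mu mu')) /\
  (* c) *)
  (p_invariant Phi (W_over Phi mu) /\ n_invariant Phi (W_under Phi mu)).
Proof.
have HWmu := W_under_mu Hfix.
have HWsub := W_under_sub_W_over Hfix.
split; first by split=> mu'; [exact: W_over_lim_is | exact: W_under_lim_is].
split; first by split=> //; split=> //; split; exists mu => //; exact: HWsub.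
by split; [exact: W_over_p_invariant | exact: W_under_n_invariant].
Qed.
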